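(* Let $E$ be an arbitrary graph satisfying Condition (L), $X\subseteq{\rm Reg}(E)$ and $Y={\rm Reg}(E)\setminus X$. Let $A$ be a ring and $\pi:C_K^X(E)\to A$ a ring homomorphism such that $\pi(u)\ne0$ for every $u\in E^0$ and $\pi\big(v-\sum_{e\in s^{-1}(v)}ee^*\big)\ne 0$ for every $v\in Y$. Then $\pi$ is injective.
   Context: Let $K$ be a field and $E=(E^0,E^1,r,s)$ a directed graph (no countability or finiteness assumptions). A vertex $v$ is regular if $s^{-1}(v)$ is finite and nonempty; ${\rm Reg}(E)$ is the set of regular vertices. For $X\subseteq{\rm Reg}(E)$, the relative Cohn path algebra $C_K^X(E)$ is the free $K$-algebra generated by $E^0\cup E^1\cup\{e^*:e\in E^1\}$ subject to: $vw=\delta_{v,w}v$; $s(e)e=er(e)=e$ and $r(e)e^*=e^*s(e)=e^*$; $e^*f=\delta_{e,f}r(e)$; $v=\sum_{e\in s^{-1}(v)}ee^*$ for every $v\in X$. A cycle is a path $e_1\cdots e_n$ ($n\ge1$) with $r(e_n)=s(e_1)$ and $s(e_i)\ne s(e_j)$ for $i\ne j$. An exit of $e_1\cdots e_n$ is an edge $e$ with $s(e)=s(e_i)$ for some $i$ and $e\ne e_i$. $E$ satisfies Condition (L) if every cycle in $E$ has an exit. *)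

From HB Require Import structures.
From mathcomp Require Import all_boot all_order all_algebra.
From Stdlib Require Import List.
Set Implicit Arguments. Unset Strict Implicit. Unset Printing Implicit Defensive.
Import GRing.Theory.
Local Open Scope ring_scope.

(** Rings are NOT assumed unital (C_K^X(E) is unital only when E^0 is finite).
    A (possibly non-unital) ring: an additive abelian group with an associative,
    biadditive multiplication. *)
Record nuring := NURing {
  nr_sort :> zmodType;
  nr_mul : nr_sort -> nr_sort -> nr_sort;
  nr_mulA : forall x y z, nr_mul x (nr_mul y z) = nr_mul (nr_mul x y) z;
  nr_mulDl : forall x y z, nr_mul (x + y) z = nr_mul x z + nr_mul y z;
  nr_mulDr : forall x y z, nr_mul x (y + z) = nr_mul x y + nr_mul x z }.

Record nualg (K : fieldType) := NUAlg {
  na_sort :> lmodType K;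
  na_mul : na_sort -> na_sort -> na_sort;
  na_mulA : forall x y z, na_mul x (na_mul y z) = na_mul (na_mul x y) z;
  na_mulDl : forall x y z, na_mul (x + y) z = na_mul x z + na_mul y z;
  na_mulDr : forall x y z, na_mul x (y + z) = na_mul x y + na_mul x z;
  na_scalerAl : forall (a : K) x y, a *: na_mul x y = na_mul (a *: x) y;
  na_scalerAr : forall (a : K) x y, a *: na_mul x y = na_mul x (a *: y) }.

Definition nualg_ring (K : fieldType) (C : nualg K) : nuring :=
  @NURing (na_sort C) (@na_mul K C) (@na_mulA K C) (@na_mulDl K C) (@na_mulDr K C).

Definition ring_hom (R S : nuring) (f : R -> S) : Prop :=
  (forall x y, f (x + y) = f x + f y) /\
  (forall x y, f (nr_mul x y) = nr_mul (f x) (f y)).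

Definition alg_hom (K : fieldType) (B C : nualg K) (f : B -> C) : Prop :=
  (forall x y, f (x + y) = f x + f y) /\
  (forall (a : K) x, f (a *: x) = a *: f x) /\
  (forall x y, f (na_mul x y) = na_mul (f x) (f y)).

Section Graph.
Variables (E0 E1 : Type) (r s : E1 -> E0).

Definition enumerates_out (v : E0) (l : list E1) : Prop :=
  NoDup l /\ (forall e, In e l <-> s e = v).

Definition regular (v : E0) : Prop :=
  exists l, enumerates_out v l /\ l <> nil.

Fixpoint path_chain (p : list E1) : Prop :=
  match p with
  | e :: ((f :: _) as q) => r e = s f /\ path_chain q
  | _ => True
  end.

Definition is_cycle (p : list E1) : Prop :=
  match p with
  | nil => False
  | e1 :: _ => path_chain p /\ r (last p e1) = s e1 /\ NoDup (map s p)
  end.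

Definition is_exit (p : list E1) (e : E1) : Prop :=
  exists f, In f p /\ s e = s f /\ e <> f.

Definition condition_L : Prop :=
  forall p, is_cycle p -> exists e, is_exit p e.

Definition cohn_family (K : fieldType) (X : E0 -> Prop) (B : nualg K)
    (pv : E0 -> B) (pe pes : E1 -> B) : Prop :=
  (forall v, na_mul (pv v) (pv v) = pv v) /\
  (forall v w, v <> w -> na_mul (pv v) (pv w) = 0) /\
  (forall e, na_mul (pv (s e)) (pe e) = pe e) /\
  (forall e, na_mul (pe e) (pv (r e)) = pe e) /\
  (forall e, na_mul (pv (r e)) (pes e) = pes e) /\
  (forall e, na_mul (pes e) (pv (s e)) = pes e) /\
  (forall e, na_mul (pes e) (pe e) = pv (r e)) /\
  (forall e f, e <> f -> na_mul (pes e) (pe f) = 0) /\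
  (forall v, X v -> forall l, enumerates_out v l ->
       pv v = \sum_(e <- l) na_mul (pe e) (pes e)).

(** (C, cv, ce, ces) is the relative Cohn path algebra C_K^X(E):
    the free K-algebra on E^0 ∪ E^1 ∪ E^1* modulo the Cohn relations,
    characterised by its universal property. *)
Definition is_rel_cohn_path_algebra (K : fieldType) (X : E0 -> Prop)
    (C : nualg K) (cv : E0 -> C) (ce ces : E1 -> C) : Prop :=
  cohn_family X cv ce ces /\
  (forall (B : nualg K) (bv : E0 -> B) (be bes : E1 -> B),
      cohn_family X bv be bes ->
      exists phi : C -> B, alg_hom phi /\
        (forall v, phi (cv v) = bv v) /\
        (forall e, phi (ce e) = be e) /\
        (forall e, phi (ces e) = bes e)) /\
  (forall (B : nualg K) (phi psi : C -> B), alg_hom phi -> alg_hom psi ->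
      (forall v, phi (cv v) = psi (cv v)) ->
      (forall e, phi (ce e) = psi (ce e)) ->
      (forall e, phi (ces e) = psi (ces e)) ->
      forall x, phi x = psi x).

End Graph.

(* Every element of C_K^X(E) is a linear combination of monomials [mu nu^*]: these span a
   subalgebra containing the generators, so the universal property makes it everything.
   Given [x <> 0] with [pi x = 0], right multiplication by a vertex and then by edges shortens
   the ghost parts until [x b = y p <> 0], where [y] is a combination of paths ending at a
   vertex [w] and [p] is [w], the gap [w - sum e e^*] of a vertex of [Y], or a finite
   truncation of that gap at an irregular vertex. Multiplying on the left by the ghost of a
   shortest path of [y] leaves [(c w + closed paths at w) p] with [c <> 0] in the kernel.
   Condition (L) provides a path escaping all these closed paths, and sandwiching then puts
   a nonzero multiple of a vertex or of a gap of [Y] in the kernel, against the hypotheses. *)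

From HB Require Import structures.
From mathcomp Require Import all_boot all_order all_algebra.
From mathcomp Require Import boolp zify.
From Stdlib Require Import List Lia.
Set Implicit Arguments. Unset Strict Implicit. Unset Printing Implicit Defensive.
Import GRing.Theory.
Local Open Scope ring_scope.
Local Open Scope seq_scope.

Section NonUnitalRing.
Variable A : nuring.
Local Notation "x ** y" := (@nr_mul A x y) (at level 40, left associativity).

Lemma nr_mul0l (x : A) : 0 ** x = 0.
Proof. by apply: (addrI (0 ** x)); rewrite -nr_mulDl !addr0. Qed.

Lemma nr_mul0r (x : A) : x ** 0 = 0.
Proof. by apply: (addrI (x ** 0)); rewrite -nr_mulDr !addr0. Qed.

Lemma nr_mulNl (x y : A) : (- x) ** y = - (x ** y).
Proof. by apply/eqP; rewrite -subr_eq0 opprK -nr_mulDl addNr nr_mul0l. Qed.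

Lemma nr_mulNr (x y : A) : x ** (- y) = - (x ** y).
Proof. by apply/eqP; rewrite -subr_eq0 opprK -nr_mulDr addNr nr_mul0r. Qed.

Lemma nr_mul_suml (I : Type) (l : list I) (F : I -> A) (y : A) :
  (\sum_(i <- l) F i) ** y = \sum_(i <- l) F i ** y.
Proof. exact: (big_morph (fun x => x ** y) (fun a b => nr_mulDl a b y) (nr_mul0l y)). Qed.

Lemma nr_mul_sumr (I : Type) (l : list I) (F : I -> A) (y : A) :
  y ** (\sum_(i <- l) F i) = \sum_(i <- l) y ** F i.
Proof. exact: (big_morph (fun x => y ** x) (nr_mulDr y) (nr_mul0r y)). Qed.

End NonUnitalRing.

Section RingHom.
Variables (R S : nuring) (pi : R -> S).
Hypothesis pi_hom : ring_hom pi.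

Lemma ring_homB x y : pi (x - y) = pi x - pi y.
Proof. by have := pi_hom.1 (x - y) y; rewrite subrK => ->; rewrite addrK. Qed.

Lemma ring_hom_inj : (forall x, pi x = 0 -> x = 0) -> injective pi.
Proof.
move=> ker0 x y /eqP; rewrite -subr_eq0 -ring_homB => /eqP/ker0/eqP.
by rewrite subr_eq0 => /eqP.
Qed.

Lemma ring_hom_kerMl a x : pi x = 0 -> pi (nr_mul a x) = 0.
Proof. by move=> px0; rewrite pi_hom.2 px0 nr_mul0r. Qed.

Lemma ring_hom_kerMr x a : pi x = 0 -> pi (nr_mul x a) = 0.
Proof. by move=> px0; rewrite pi_hom.2 px0 nr_mul0l. Qed.

End RingHom.

Section NonUnitalAlgebra.
Variables (K : fieldType) (C : nualg K).
Local Notation "x ** y" := (@na_mul K C x y) (at level 40, left associativity).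

Lemma nmulA (x y z : C) : x ** (y ** z) = x ** y ** z. Proof. exact: na_mulA. Qed.
Lemma nmulDl (x y z : C) : (x + y) ** z = x ** z + y ** z. Proof. exact: na_mulDl. Qed.
Lemma nmulDr (x y z : C) : x ** (y + z) = x ** y + x ** z. Proof. exact: na_mulDr. Qed.
Lemma nmul0l (x : C) : 0 ** x = 0. Proof. exact: (@nr_mul0l (nualg_ring C) x). Qed.
Lemma nmul0r (x : C) : x ** 0 = 0. Proof. exact: (@nr_mul0r (nualg_ring C) x). Qed.
Lemma nmulNl (x y : C) : (- x) ** y = - (x ** y). Proof. exact: (@nr_mulNl (nualg_ring C) x y). Qed.
Lemma nmulNr (x y : C) : x ** (- y) = - (x ** y). Proof. exact: (@nr_mulNr (nualg_ring C) x y). Qed.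
Lemma nmulBl (x y z : C) : (x - y) ** z = x ** z - y ** z. Proof. by rewrite nmulDl nmulNl. Qed.
Lemma nmulBr (x y z : C) : x ** (y - z) = x ** y - x ** z. Proof. by rewrite nmulDr nmulNr. Qed.
Lemma nmulZl (a : K) (x y : C) : (a *: x) ** y = a *: (x ** y). Proof. by rewrite na_scalerAl. Qed.
Lemma nmulZr (a : K) (x y : C) : x ** (a *: y) = a *: (x ** y). Proof. by rewrite na_scalerAr. Qed.
Lemma nmul_suml (I : Type) (l : list I) (F : I -> C) (y : C) :
  (\sum_(i <- l) F i) ** y = \sum_(i <- l) F i ** y.
Proof. exact: (nr_mul_suml (A := nualg_ring C)). Qed.
Lemma nmul_sumr (I : Type) (l : list I) (F : I -> C) (y : C) :
  y ** (\sum_(i <- l) F i) = \sum_(i <- l) y ** F i.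
Proof. exact: (nr_mul_sumr (A := nualg_ring C)). Qed.

(* Kernels of ring morphisms need not be K-subspaces; idempotence gives just enough scaling. *)
Lemma ideal_unscale_idem (Z : C -> Prop) (c : K) (y : C) :
  (forall a x, Z x -> Z (a ** x)) -> c != 0 -> y ** y = y -> Z (c *: y) -> Z y.
Proof.
move=> ZMl c0 yy Zcy.
have -> : y = (c^-1 *: y) ** (c *: y) by rewrite nmulZl nmulZr yy scalerA mulVf // scale1r.
exact: ZMl.
Qed.

End NonUnitalAlgebra.

Section ListSums.
Variables (V : zmodType) (I : Type).

Lemma eq_big_In (l : list I) (F G : I -> V) :
  (forall i, In i l -> F i = G i) -> \sum_(i <- l) F i = \sum_(i <- l) G i.
Proof.
elim: l => [|a l IH] FG; first by rewrite !big_nil.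
rewrite !big_cons FG /=; last by left.
by rewrite IH // => i li; apply: FG; right.
Qed.

Lemma big_In0 (l : list I) (F : I -> V) :
  (forall i, In i l -> F i = 0) -> \sum_(i <- l) F i = 0.
Proof. by move=> F0; rewrite (eq_big_In F0) big1. Qed.

Lemma big_In1 (l : list I) (F : I -> V) j :
  NoDup l -> In j l -> (forall i, In i l -> i <> j -> F i = 0) -> \sum_(i <- l) F i = F j.
Proof.
elim: l => [|a l IH] //= /NoDup_cons_iff[al ndl] jl F0; rewrite big_cons.
case: jl => [aj|jl].
  subst j; rewrite big_In0 ?addr0 // => i il; apply: F0 (or_intror il) _.
  by move=> ia; apply: al; rewrite -ia.
rewrite F0 ?add0r; [|by left|by move=> aj; apply: al; rewrite aj].
by apply: IH => // i il; apply: F0; right.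
Qed.

End ListSums.

Notation dedup := (nodup (fun x y => pselect (x = y))).

Lemma size_filter_lt (T : Type) (a : pred T) (l : list T) x :
  In x l -> ~~ a x -> (size [seq y <- l | a y] < size l)%N.
Proof.
elim: l => [|y l IH] //= [<-|xl] ax; first by rewrite (negbTE ax) ltnS size_filter count_size.
by case: (a y); rewrite /= ltnS; [exact: IH | exact/ltnW/IH].
Qed.

Lemma In_argmin (T : Type) (f : T -> nat) (l : list T) :
  l <> nil -> exists x, In x l /\ forall y, In y l -> (f x <= f y)%N.
Proof.
elim: l => [|a l IH] // _; case: l IH => [|b l] IH.
  by exists a; split=> [|y [<-|]]; [left| |].
have [x [xl xmin]] := IH (@nil_cons _ b l \o esym).
have [fax|fxa] := leqP (f a) (f x).
  by exists a; split=> [|y [<-|/xmin]]; [left| |exact: leq_trans].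
by exists x; split=> [|y [<-|/xmin]]; [right| exact: ltnW|].
Qed.

Section Paths.
Variables (E0 E1 : Type) (r s : E1 -> E0).

Definition psrc (p : list E1) (v : E0) : E0 := if p is e :: _ then s e else v.

Fixpoint path_to (p : list E1) (w : E0) : Prop :=
  if p is e :: p' then r e = psrc p' w /\ path_to p' w else True.

Definition closed_path (g : list E1) (v : E0) : Prop :=
  g <> nil /\ path_to g v /\ psrc g v = v.

Lemma psrc_cat p q w : psrc (p ++ q) w = psrc p (psrc q w).
Proof. by case: p. Qed.

Lemma path_to_cat p q w : path_to (p ++ q) w <-> path_to p (psrc q w) /\ path_to q w.
Proof. by elim: p => [|e p IH] /=; rewrite ?psrc_cat ?IH; tauto. Qed.

Lemma path_to_chain p w : path_to p w -> path_chain r s p.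
Proof. by elim: p => [|e [|f p] IH] // [ref pw]; split; last exact: IH. Qed.

Lemma path_to_last e p w d : path_to (e :: p) w -> r (last (e :: p) d) = w.
Proof. by elim: p e => [|f p IH] e /= [ew pw] //; exact: IH. Qed.

Lemma not_NoDup_split (g : list E1) : ~ NoDup (map s g) ->
  exists g1 f g2 h g3, g = g1 ++ f :: g2 ++ h :: g3 /\ s f = s h.
Proof.
elim: g => [|a g IH] /= gND; first by case: gND; constructor.
have [/in_map_iff[h [ha hg]]|na] := pselect (In (s a) (map s g)).
  have [g2 [g3 ->]] : exists g2 g3, g = g2 ++ h :: g3 := in_split _ _ hg.
  by exists nil, a, g2, h, g3.
have [|g1 [f [g2 [h [g3 [-> fh]]]]]] := IH; first by move=> ND; apply: gND; constructor.
by exists (a :: g1), f, g2, h, g3.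
Qed.

(* A closed path with a repeated vertex contains a strictly shorter closed path,
   and one without is a cycle, which has an exit by Condition (L). *)
Lemma closed_path_exit g v : condition_L r s -> closed_path g v -> exists e, is_exit s g e.
Proof.
move=> HL; have [n] := ubnP (size g); elim: n g v => // n IH g v /ltnSE gn [g0 [gv vg]].
have [gND|/not_NoDup_split[g1 [f [g2 [h [g3 [gE fh]]]]]]] := pselect (NoDup (map s g)).
  case: g g0 gv vg gND {gn} => [|e1 g] // _ gv vg gND.
  apply: HL; split; first exact: path_to_chain gv.
  by split=> //; rewrite (path_to_last _ gv) -vg.
have fg2 : closed_path (f :: g2) (s f).
  move: gv; rewrite gE => /path_to_cat[_] /(path_to_cat (f :: g2))[fg2 _].
  by split=> //; split; first by rewrite fh.
have [|e [f' [f'g e']]] := IH _ _ _ fg2.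
  by move: gn; rewrite gE !size_cat /= size_cat /=; lia.
exists e, f'; split=> //; rewrite gE; apply/in_or_app; right.
by case: f'g => [<-|f'g2]; [left|right; apply/in_or_app; left].
Qed.

Definition pathpow (g : list E1) (k : nat) : list E1 := iter k (cat g) [::].

Lemma pathpowSr g k : pathpow g k.+1 = pathpow g k ++ g.
Proof.
elim: k => [|k IH]; first by rewrite /pathpow /= cats0.
by change (g ++ pathpow g k.+1 = pathpow g k.+1 ++ g); rewrite {1}IH catA.
Qed.

Lemma size_pathpow g k : size (pathpow g k) = (k * size g)%N.
Proof. by elim: k => [|k IH] //; rewrite /pathpow iterS size_cat -/(pathpow g k) IH mulSn. Qed.

Lemma pathpow_closed g w k : closed_path g w ->
  path_to (pathpow g k) w /\ psrc (pathpow g k) w = w.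
Proof.
move=> [_ [gw wg]]; elim: k => [|k [IH1 IH2]] //.
by rewrite /pathpow iterS -/(pathpow g k) path_to_cat psrc_cat IH2.
Qed.

Lemma prefix_pathpow g l : g <> nil -> (exists m, g ++ l = l ++ m) ->
  exists rho, pathpow g (size l).+1 = l ++ rho.
Proof.
move=> g0 [m glm].
have [m' powl] : exists m', pathpow g (size l).+1 ++ l = l ++ m'.
  elim: (size l).+1 => [|k [mk IH]]; first by exists nil; rewrite cats0.
  by exists (m ++ mk); rewrite /pathpow iterS -catA -/(pathpow g k) IH catA glm catA.
have [rho [[-> _]|[lE _]]] := app_eq_app _ _ _ _ powl; first by exists rho.
have gpos : (0 < size g)%N by case: g g0 {glm powl lE}.
by have := f_equal size lE; rewrite !size_cat size_pathpow; nia.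
Qed.

Lemma not_prefix_cat (g l d : list E1) : g <> nil -> (forall m, g ++ l <> l ++ m) ->
  forall m, g ++ l ++ d <> (l ++ d) ++ m.
Proof.
move=> g0 gl m; rewrite !catA -(catA l) => /app_eq_app[l' [[glE _]|[lE _]]].
  exact: (gl l').
have gpos : (0 < size g)%N by case: g g0 {gl lE}.
by have := f_equal size lE; rewrite !size_cat; lia.
Qed.

(* If [g ++ l0] begins with [l0], then [l0] is a prefix of a power of [g]; following that
   power and then leaving [g] through an exit gives an extension of [l0] with no such
   property. *)
Lemma escape_closed_path g w l0 t0 : condition_L r s -> closed_path g w ->
  path_to l0 t0 -> psrc l0 t0 = w -> exists d t,
    path_to (l0 ++ d) t /\ psrc (l0 ++ d) t = w /\ forall m, g ++ l0 ++ d <> (l0 ++ d) ++ m.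
Proof.
move=> HL gw l0t0 l0w.
have [gl0|/forallNP ngl0] := pselect (exists m, g ++ l0 = l0 ++ m); last first.
  by exists nil, t0; rewrite !cats0; split=> // m glm; apply: (ngl0 m).
have [e [f [fg [ef e'f]]]] := closed_path_exit HL gw.
have [rho powE] := prefix_pathpow gw.1 gl0.
have [g1 [g2 gE]] : exists g1 g2, g = g1 ++ f :: g2 := in_split _ _ fg.
have [powt powsrc] := pathpow_closed (size l0).+1 gw.
have [_ [gpath gsrc]] := gw.
have g1f : path_to g1 (s f) by move: gpath; rewrite gE => /path_to_cat[].
have g1w : psrc g1 (s f) = w by rewrite -gsrc gE psrc_cat.
have [g1e g1ew] : path_to (g1 ++ [:: e]) (r e) /\ psrc (g1 ++ [:: e]) (r e) = w.
  by rewrite path_to_cat psrc_cat /= ef.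
exists (rho ++ g1 ++ [:: e]), (r e).
rewrite catA -powE path_to_cat g1ew psrc_cat g1ew powsrc.
have noprefix P : g ++ P = P ++ g -> forall m, g ++ P ++ g1 ++ [:: e] <> (P ++ g1 ++ [:: e]) ++ m.
  move=> gP m; rewrite catA gP -!catA => /app_inv_head.
  by rewrite gE -catA => /app_inv_head [/esym].
by split=> //; split=> //; apply: noprefix; rewrite -pathpowSr.
Qed.

Lemma escape_closed_paths w (G : list (list E1)) : condition_L r s ->
  (forall g, In g G -> closed_path g w) ->
  exists l t, path_to l t /\ psrc l t = w /\ forall g, In g G -> forall m, g ++ l <> l ++ m.
Proof.
move=> HL; elim: G => [|g G IH] Gw; first by exists nil, w.
have [l0 [t0 [l0t0 [l0w l0G]]]] := IH (fun g' g'G => Gw g' (or_intror g'G)).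
have [d [t [dt [dw gd]]]] := escape_closed_path HL (Gw g (or_introl erefl)) l0t0 l0w.
exists (l0 ++ d), t; split=> //; split=> // g' [<-|g'G] m; first exact: gd.
by apply: not_prefix_cat (l0G _ g'G) m; case: (Gw g' (or_intror g'G)).
Qed.

End Paths.

Section CohnFamily.
Variables (K : fieldType) (E0 E1 : Type) (r s : E1 -> E0) (X : E0 -> Prop)
  (C : nualg K) (cv : E0 -> C) (ce ces : E1 -> C).
Hypothesis HF : cohn_family r s X cv ce ces.
Local Notation "x ** y" := (@na_mul K C x y) (at level 40, left associativity).
Local Notation psrc := (psrc s).
Local Notation path_to := (path_to r s).
Local Notation closed_path := (closed_path r s).

Lemma cv_idem v : cv v ** cv v = cv v.
Proof. by case: HF. Qed.
Lemma cv_orth v w : v <> w -> cv v ** cv w = 0.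
Proof. by case: HF => _ [H _]; apply: H. Qed.
Lemma cv_ce e : cv (s e) ** ce e = ce e.
Proof. by case: HF => _ [_ [H _]]. Qed.
Lemma ce_cv e : ce e ** cv (r e) = ce e.
Proof. by case: HF => _ [_ [_ [H _]]]. Qed.
Lemma cv_ces e : cv (r e) ** ces e = ces e.
Proof. by case: HF => _ [_ [_ [_ [H _]]]]. Qed.
Lemma ces_cv e : ces e ** cv (s e) = ces e.
Proof. by case: HF => _ [_ [_ [_ [_ [H _]]]]]. Qed.
Lemma ces_ce e : ces e ** ce e = cv (r e).
Proof. by case: HF => _ [_ [_ [_ [_ [_ [H _]]]]]]. Qed.
Lemma ces_ce_neq e f : e <> f -> ces e ** ce f = 0.
Proof. by case: HF => _ [_ [_ [_ [_ [_ [_ [H _]]]]]]]; apply: H. Qed.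
Lemma cv_cohn v l : X v -> enumerates_out s v l -> cv v = \sum_(e <- l) ce e ** ces e.
Proof. by move=> Xv lv; case: HF => _ [_ [_ [_ [_ [_ [_ [_ H]]]]]]]; apply: H. Qed.

Lemma cv_ce0 v e : v <> s e -> cv v ** ce e = 0.
Proof. by move=> ve; rewrite -cv_ce nmulA cv_orth // nmul0l. Qed.
Lemma ce_cv0 e v : v <> r e -> ce e ** cv v = 0.
Proof. by move=> ve; rewrite -ce_cv -nmulA cv_orth ?nmul0r // => /esym. Qed.
Lemma ces_cv0 e v : v <> s e -> ces e ** cv v = 0.
Proof. by move=> ve; rewrite -ces_cv -nmulA cv_orth ?nmul0r // => /esym. Qed.

Definition gap v (l : list E1) : C := cv v - \sum_(e <- l) ce e ** ces e.

Section Gap.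
Variables (v : E0) (l : list E1).
Hypotheses (l_uniq : NoDup l) (l_out : forall e, In e l -> s e = v).

Lemma gap_cv : gap v l ** cv v = gap v l.
Proof.
rewrite nmulBl cv_idem nmul_suml; congr (_ - _); apply: eq_big_In => e el.
by rewrite -nmulA -(l_out el) ces_cv.
Qed.

Lemma gap_ce f : In f l -> gap v l ** ce f = 0.
Proof.
move=> fl; rewrite nmulBl -(l_out fl) cv_ce nmul_suml (big_In1 l_uniq fl).
  by rewrite -nmulA ces_ce ce_cv subrr.
by move=> e el ef; rewrite -nmulA ces_ce_neq ?nmul0r.
Qed.

Lemma ces_gap f : In f l -> ces f ** gap v l = 0.
Proof.
move=> fl; rewrite nmulBr -(l_out fl) ces_cv nmul_sumr (big_In1 l_uniq fl).
  by rewrite nmulA ces_ce cv_ces subrr.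
by move=> e el ef; rewrite nmulA ces_ce_neq 1?nmul0l // => /esym.
Qed.

Lemma gap_idem : gap v l ** gap v l = gap v l.
Proof.
rewrite {2}/gap nmulBr gap_cv nmul_sumr big_In0 ?subr0 // => e el.
by rewrite nmulA gap_ce ?nmul0l.
Qed.

End Gap.

Fixpoint lpath (mu : list E1) (a : C) : C :=
  if mu is e :: mu' then ce e ** lpath mu' a else a.
Fixpoint rghost (a : C) (nu : list E1) : C :=
  if nu is e :: nu' then rghost a nu' ** ces e else a.
(* [monomial mu u nu] is [mu nu^*]; the vertex [u] only matters when [mu] and [nu] are empty. *)
Definition monomial mu u nu := lpath mu (rghost (cv u) nu).

Lemma lpath_mulr mu a b : lpath mu (a ** b) = lpath mu a ** b.
Proof. by elim: mu => //= e mu ->; rewrite nmulA. Qed.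
Lemma lpath_cat mu mu' a : lpath (mu ++ mu') a = lpath mu (lpath mu' a).
Proof. by elim: mu => //= e mu ->. Qed.
Lemma lpath0 mu : lpath mu 0 = 0.
Proof. by elim: mu => //= e mu ->; rewrite nmul0r. Qed.
Lemma lpath_cv mu w : cv (psrc mu w) ** lpath mu (cv w) = lpath mu (cv w).
Proof. by case: mu => [|e mu] /=; rewrite ?cv_idem // nmulA cv_ce. Qed.

Lemma rghost_mull a b nu : rghost (a ** b) nu = a ** rghost b nu.
Proof. by elim: nu => //= e nu ->; rewrite nmulA. Qed.
Lemma rghost_rcons a nu e : rghost a (nu ++ [:: e]) = rghost (a ** ces e) nu.
Proof. by elim: nu => //= f nu ->. Qed.
Lemma rghost0 nu : rghost 0 nu = 0.
Proof. by elim: nu => //= e nu ->; rewrite nmul0l. Qed.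
Lemma rghost_cv u nu : rghost (cv u) nu ** cv (psrc nu u) = rghost (cv u) nu.
Proof. by case: nu => [|e nu] /=; rewrite ?cv_idem // -nmulA ces_cv. Qed.
Lemma rghost_cv0 u nu w : w <> psrc nu u -> rghost (cv u) nu ** cv w = 0.
Proof.
case: nu => [|e nu] /= wu; first by apply: cv_orth => /esym.
by rewrite -nmulA ces_cv0 ?nmul0r.
Qed.

Lemma monomial_cv mu u nu : monomial mu u nu ** cv (psrc nu u) = monomial mu u nu.
Proof. by rewrite /monomial -lpath_mulr rghost_cv. Qed.
Lemma monomial_cv0 mu u nu w : w <> psrc nu u -> monomial mu u nu ** cv w = 0.
Proof. by move=> wu; rewrite /monomial -lpath_mulr rghost_cv0 // lpath0. Qed.
Lemma monomial_cons mu u f nu : monomial mu u (f :: nu) = monomial mu u nu ** ces f.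
Proof. by rewrite /monomial -lpath_mulr. Qed.
Lemma monomial_nil_ce mu e : monomial mu (s e) [::] ** ce e = monomial (mu ++ [:: e]) (r e) [::].
Proof. by rewrite /monomial /= -lpath_mulr cv_ce lpath_cat /= ce_cv. Qed.
Lemma monomial_nil_ce0 mu u e : u <> s e -> monomial mu u [::] ** ce e = 0.
Proof. by move=> ue; rewrite /monomial /= -lpath_mulr cv_ce0 // lpath0. Qed.
Lemma monomial_cons_ce mu u e nu : monomial mu u (e :: nu) ** ce e = monomial mu u nu ** cv (r e).
Proof. by rewrite monomial_cons -!nmulA ces_ce. Qed.
Lemma monomial_cons_ce0 mu u e f nu : f <> e -> monomial mu u (f :: nu) ** ce e = 0.
Proof. by move=> fe; rewrite monomial_cons -nmulA ces_ce_neq // nmul0r. Qed.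

Inductive mspan (P : list E1 -> E0 -> list E1 -> Prop) : C -> Prop :=
  | mspan0 : mspan P 0
  | mspanD x y : mspan P x -> mspan P y -> mspan P (x + y)
  | mspanZ k mu u nu : P mu u nu -> mspan P (k *: monomial mu u nu).

Notation mspan_all := (mspan (fun _ _ _ => True)).

Lemma mspan_monomial P mu u nu : P mu u nu -> mspan P (monomial mu u nu).
Proof. by move=> Pm; rewrite -(scale1r (monomial mu u nu)); constructor. Qed.

Lemma mspan_scale P k x : mspan P x -> mspan P (k *: x).
Proof.
by elim=> [|x1 x2 _ IH1 _ IH2|k' mu u nu Pm]; rewrite ?scaler0 ?scalerDr ?scalerA; constructor.
Qed.

Lemma sub_mspan P Q x : (forall mu u nu, P mu u nu -> Q mu u nu) -> mspan P x -> mspan Q x.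
Proof. by move=> PQ; elim=> *; constructor; auto. Qed.

Lemma mspan_map P Q (f : C -> C) x :
  (forall a b, f (a + b) = f a + f b) -> (forall k a, f (k *: a) = k *: f a) ->
  (forall mu u nu, P mu u nu -> mspan Q (f (monomial mu u nu))) ->
  mspan P x -> mspan Q (f x).
Proof.
move=> fD fZ fP; elim=> [|x1 x2 _ IH1 _ IH2|k mu u nu Pm].
- have f0 : f 0 = 0 by apply: (addrI (f 0)); rewrite -fD !addr0.
  by rewrite f0; constructor.
- by rewrite fD; constructor.
- by rewrite fZ; apply/mspan_scale/fP.
Qed.

Lemma mspan_mull P Q (a : C) x :
  (forall mu u nu, P mu u nu -> mspan Q (a ** monomial mu u nu)) ->
  mspan P x -> mspan Q (a ** x).
Proof. by apply: mspan_map => [b c|k b]; rewrite ?nmulDr ?nmulZr. Qed.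

Lemma mspan_mulr P Q (a : C) x :
  (forall mu u nu, P mu u nu -> mspan Q (monomial mu u nu ** a)) ->
  mspan P x -> mspan Q (x ** a).
Proof. by apply: (@mspan_map _ _ (fun y => y ** a)) => [b c|k b]; rewrite ?nmulDl ?nmulZl. Qed.

Lemma mspan_cvl v x : mspan_all x -> mspan_all (cv v ** x).
Proof.
apply: mspan_mull => -[|e mu] u nu _; rewrite /monomial /=.
- have [<-|vu] := pselect (v = u); last by rewrite -rghost_mull cv_orth // rghost0; constructor.
  by rewrite -rghost_mull cv_idem; exact: (@mspan_monomial _ [::]).
- have [->|ve] := pselect (v = s e); last by rewrite nmulA cv_ce0 // nmul0l; constructor.
  by rewrite nmulA cv_ce; exact: (@mspan_monomial _ (e :: mu)).
Qed.

Lemma mspan_cel e x : mspan_all x -> mspan_all (ce e ** x).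
Proof. by apply: mspan_mull => mu u nu _; apply: (@mspan_monomial _ (e :: mu)). Qed.

Lemma mspan_cesl e x : mspan_all x -> mspan_all (ces e ** x).
Proof.
apply: mspan_mull => -[|f mu] u nu _; rewrite /monomial /=.
- have [->|ue] := pselect (u = s e); last first.
    by rewrite -rghost_mull ces_cv0 // rghost0; constructor.
  rewrite -rghost_mull ces_cv -[ces e]cv_ces -rghost_rcons.
  exact: (@mspan_monomial _ [::] _ (nu ++ [:: e])).
- have [<-|ef] := pselect (e = f); last by rewrite nmulA ces_ce_neq // nmul0l; constructor.
  by rewrite nmulA ces_ce; apply/mspan_cvl/(@mspan_monomial _ mu).
Qed.

Lemma mspan_mul x y : mspan_all x -> mspan_all y -> mspan_all (x ** y).
Proof.
move=> + ally; apply: mspan_mulr => mu u nu _.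
rewrite /monomial -lpath_mulr; elim: mu => [|e mu IH] /=; last exact: mspan_cel.
elim: nu y ally => [|e nu IH] y ally /=; first exact: mspan_cvl.
by rewrite -nmulA; apply/IH/mspan_cesl.
Qed.

Lemma mspan_cv v : mspan_all (cv v).
Proof. exact: (@mspan_monomial _ [::] v [::]). Qed.
Lemma mspan_ce e : mspan_all (ce e).
Proof. by rewrite -ce_cv; exact: (@mspan_monomial _ [:: e] (r e) [::]). Qed.
Lemma mspan_ces e : mspan_all (ces e).
Proof. by rewrite -cv_ces; exact: (@mspan_monomial _ [::] (r e) [:: e]). Qed.

Definition mspan_pred : pred C := fun x => `[< mspan_all x >].

Lemma mspan_submod_closed : submod_closed mspan_pred.
Proof.
split=> [|k x y /asboolP mx /asboolP my]; apply/asboolP; first by constructor.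
by constructor; first exact: mspan_scale.
Qed.

Record mspan_subalg := MspanSub { mspan_val : C; mspan_valP : mspan_pred mspan_val }.
HB.instance Definition _ := [isSub for mspan_val].
HB.instance Definition _ := [Choice of mspan_subalg by <:].
HB.instance Definition _ := GRing.isSubmodClosed.Build K C mspan_pred mspan_submod_closed.
HB.instance Definition _ := [SubChoice_isSubLmodule of mspan_subalg by <:].

Lemma mspan_predM (x y : mspan_subalg) : mspan_pred (mspan_val x ** mspan_val y).
Proof. by apply/asboolP/mspan_mul; apply/asboolP/mspan_valP. Qed.

Definition mspan_sub_mul (x y : mspan_subalg) : mspan_subalg := MspanSub (mspan_predM x y).

Fact mspan_sub_mulA x y z :
  mspan_sub_mul x (mspan_sub_mul y z) = mspan_sub_mul (mspan_sub_mul x y) z.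
Proof. by apply: val_inj; apply: nmulA. Qed.
Fact mspan_sub_mulDl x y z : mspan_sub_mul (x + y) z = mspan_sub_mul x z + mspan_sub_mul y z.
Proof. by apply: val_inj; apply: nmulDl. Qed.
Fact mspan_sub_mulDr x y z : mspan_sub_mul x (y + z) = mspan_sub_mul x y + mspan_sub_mul x z.
Proof. by apply: val_inj; apply: nmulDr. Qed.
Fact mspan_sub_scalerAl (a : K) x y : a *: mspan_sub_mul x y = mspan_sub_mul (a *: x) y.
Proof. by apply: val_inj; apply: na_scalerAl. Qed.
Fact mspan_sub_scalerAr (a : K) x y : a *: mspan_sub_mul x y = mspan_sub_mul x (a *: y).
Proof. by apply: val_inj; apply: na_scalerAr. Qed.

Definition mspan_alg : nualg K := NUAlg mspan_sub_mulA mspan_sub_mulDl mspan_sub_mulDr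
  mspan_sub_scalerAl mspan_sub_scalerAr.

(* The universal property maps C into its subalgebra spanned by monomials, and uniqueness
   shows that this map followed by the inclusion is the identity. *)
Lemma cohn_path_algebra_spanned :
  is_rel_cohn_path_algebra r s X cv ce ces -> forall x, mspan_all x.
Proof.
case=> _ [univ uniq] x.
pose bv v : mspan_alg := MspanSub (asboolT (mspan_cv v)).
pose be e : mspan_alg := MspanSub (asboolT (mspan_ce e)).
pose bes e : mspan_alg := MspanSub (asboolT (mspan_ces e)).
have bfam : cohn_family r s X bv be bes.
  have [H1 [H2 [H3 [H4 [H5 [H6 [H7 [H8 H9]]]]]]]] := HF.
  do 8 (split; first by move=> *; apply: val_inj => /=; auto).
  move=> v Xv l lv; apply: val_inj; rewrite raddf_sum; exact: H9.
have [phi [[phiD [phiZ phiM]] [phiv [phie phies]]]] := univ _ _ _ _ bfam.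
have phiK : forall y, mspan_val (phi y) = y.
  apply: (uniq C (fun y => mspan_val (phi y)) id).
  - by split=> [a b|]; [rewrite phiD|split=> [k a|a b]; rewrite ?phiZ ?phiM].
  - by split; [|split].
  - by move=> v; rewrite phiv.
  - by move=> e; rewrite phie.
  - by move=> e; rewrite phies.
by have /asboolP := mspan_valP (phi x); rewrite phiK.
Qed.

Definition ghost_le n : list E1 -> E0 -> list E1 -> Prop := fun _ _ nu => (size nu <= n)%N.
Definition real_at w : list E1 -> E0 -> list E1 -> Prop := fun _ u nu => nu = [::] /\ u = w.
Definition ghost_in L : list E1 -> E0 -> list E1 -> Prop :=
  fun _ _ nu => exists f nu', nu = f :: nu' /\ In f L.

Lemma mspan_ghost_le x : mspan_all x -> exists n, mspan (ghost_le n) x.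
Proof.
elim=> [|x1 x2 _ [n1 IH1] _ [n2 IH2]|k mu u nu _].
- by exists 0%N; constructor.
- exists (maxn n1 n2); constructor; [apply: sub_mspan IH1 | apply: sub_mspan IH2];
    by move=> mu u nu /leq_trans; apply; rewrite ?leq_maxl ?leq_maxr.
- by exists (size nu); constructor; rewrite /ghost_le.
Qed.

Lemma mspan_mulr_cv P x w : mspan P x -> mspan P (x ** cv w).
Proof.
apply: mspan_mulr => mu u nu Pm.
have [->|wu] := pselect (w = psrc nu u); first by rewrite monomial_cv; apply: mspan_monomial.
by rewrite monomial_cv0 //; constructor.
Qed.

Lemma mspan_ghost_le0_cv x w : mspan (ghost_le 0) x -> mspan (real_at w) (x ** cv w).
Proof.
apply: mspan_mulr => mu u [|f nu] // _.
have [<-|wu] := pselect (w = u); last by rewrite monomial_cv0 //; constructor.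
by rewrite (monomial_cv mu w [::]); apply: mspan_monomial.
Qed.

Lemma mspan_ghost_le_ce n x e : mspan (ghost_le n.+1) x -> mspan (ghost_le n) (x ** ce e).
Proof.
apply: mspan_mulr => mu u [|f nu] nun.
- have [->|ue] := pselect (u = s e); last by rewrite monomial_nil_ce0 //; constructor.
  by rewrite monomial_nil_ce; apply: mspan_monomial.
- have [->|fe] := pselect (f = e); last by rewrite monomial_cons_ce0 //; constructor.
  by rewrite monomial_cons_ce; apply/mspan_mulr_cv/mspan_monomial.
Qed.

Lemma mspan_cv_support P x : mspan P x ->
  exists W, forall V, NoDup V -> incl W V -> x = x ** \sum_(v <- V) cv v.
Proof.
elim=> [|x1 x2 _ [W1 IH1] _ [W2 IH2]|k mu u nu _].
- by exists nil => V _ _; rewrite nmul0l.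
- exists (W1 ++ W2) => V Vu WV; rewrite nmulDl -IH1 -?IH2 // => v vW; apply: WV;
    by apply/in_or_app; auto.
- exists [:: psrc nu u] => V Vu WV; rewrite nmulZl nmul_sumr.
  rewrite (big_In1 Vu (WV _ (or_introl erefl))) ?monomial_cv // => v _.
  exact: monomial_cv0.
Qed.

Lemma mspan_neq0_cv P x : mspan P x -> x <> 0 -> exists w, x ** cv w <> 0.
Proof.
move=> /mspan_cv_support[W xW] x0; apply: contrapT => /forallNP xw0; apply: x0.
rewrite (xW (dedup W)); first by rewrite nmul_sumr big_In0 // => v _; apply: contrapT.
- exact: NoDup_nodup.
- by move=> v vW; apply/nodup_In.
Qed.

Lemma mspan_real_ghost P x w : mspan P x -> exists y z L,
  x ** cv w = y + z /\ mspan (real_at w) y /\ mspan (ghost_in L) z /\ forall f, In f L -> s f = w.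
Proof.
have zero : exists y z L, 0 = y + z /\ mspan (real_at w) y /\ mspan (ghost_in L) z /\
    forall f, In f L -> s f = w.
  by exists 0, 0, nil; rewrite addr0; split=> //; split; [exact: mspan0|split; [exact: mspan0|]].
elim=> [|x1 x2 _ [y1 [z1 [L1 [x1E [y1w [z1L L1w]]]]]]
          _ [y2 [z2 [L2 [x2E [y2w [z2L L2w]]]]]]|k mu u nu _].
- by rewrite nmul0l.
- exists (y1 + y2), (z1 + z2), (L1 ++ L2); rewrite nmulDl x1E x2E addrACA.
  split=> //; split; first by constructor.
  split; last by move=> f fL; case: (in_app_or _ _ _ fL); auto.
  constructor; [apply: sub_mspan z1L|apply: sub_mspan z2L] => mu u nu [f [nu' [-> fL]]];
    by exists f, nu'; split=> //; apply/in_or_app; auto.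
- rewrite nmulZl; have [wu|wu] := pselect (w = psrc nu u); last by rewrite monomial_cv0 ?scaler0.
  rewrite wu monomial_cv; case: nu wu => [|f nu] /= wu.
    exists (k *: monomial mu w [::]), 0, nil; rewrite addr0 wu.
    by split=> //; split; [exact: mspanZ|split; [exact: mspan0|]].
  exists 0, (k *: monomial mu u (f :: nu)), [:: f]; rewrite add0r.
  split=> //; split; first exact: mspan0.
  by split=> [|g [<-|]] //; apply: mspanZ; exists f, nu; split=> //; left.
Qed.

Lemma mspan_ghost_gap L M w z : mspan (ghost_in L) z -> NoDup M -> incl L M ->
  (forall e, In e M -> s e = w) -> z ** gap w M = 0.
Proof.
move=> + Mu LM Mw; elim=> [|x1 x2 _ IH1 _ IH2|k mu u nu [f [nu' [-> fL]]]].
- by rewrite nmul0l.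
- by rewrite nmulDl IH1 IH2 addr0.
- by rewrite nmulZl monomial_cons -nmulA (ces_gap Mu Mw (LM _ fL)) nmul0r scaler0.
Qed.

Lemma gap_fixed x w M : x ** cv w = x -> (forall e, x ** ce e = 0) -> x ** gap w M = x.
Proof.
move=> xw xe; rewrite nmulBr xw nmul_sumr big_In0 ?subr0 // => e _.
by rewrite nmulA xe nmul0l.
Qed.

Definition gap_kind w p :=
  p = cv w \/
  (regular s w /\ ~ X w /\ exists l, enumerates_out s w l /\ p = gap w l) \/
  (~ regular s w /\ exists L, NoDup L /\ (forall f, In f L -> s f = w) /\ p = gap w L).

Definition reduces_to_real_gap x := exists b w y p,
  x ** b = y ** p /\ y ** p <> 0 /\ mspan (real_at w) y /\ gap_kind w p.

Section Reduction.
Hypothesis X_regular : forall v, X v -> regular s v.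

Lemma ce_annihilated_real_gap P x w : mspan P x -> x ** cv w <> 0 ->
  (forall e, x ** cv w ** ce e = 0) ->
  exists y p, x ** cv w ** p = x ** cv w /\ x ** cv w ** p = y ** p /\
    mspan (real_at w) y /\ gap_kind w p.
Proof.
move=> xP xw0 xe0; have [y [z [L [xyz [yw [zL Lw]]]]]] := mspan_real_ghost w xP.
have xww : x ** cv w ** cv w = x ** cv w by rewrite -nmulA cv_idem.
have xgap M : NoDup M -> incl L M -> (forall e, In e M -> s e = w) ->
    x ** cv w ** gap w M = x ** cv w /\ x ** cv w ** gap w M = y ** gap w M.
  move=> Mu LM Mw; split; first exact: gap_fixed.
  by rewrite xyz nmulDl (mspan_ghost_gap zL Mu LM Mw) addr0.
have [Xw|nXw] := pselect (X w).
  have [l [lw _]] := X_regular Xw; case: xw0.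
  by rewrite -xww {2}(cv_cohn Xw lw) nmul_sumr big_In0 // => e _; rewrite nmulA xe0 nmul0l.
have [[l [[lu lw] l0]]|nreg] := pselect (regular s w).
  have [xl1 xl2] := xgap l lu (fun f fL => proj2 (lw f) (Lw f fL)) (fun e el => proj1 (lw e) el).
  exists y, (gap w l); do 3!split=> //; right; left.
  by split; [exists l|split=> //; exists l].
have dLw f : In f (dedup L) -> s f = w by move/nodup_In/Lw.
have [xL1 xL2] := xgap (dedup L) (NoDup_nodup _ L) (fun f fL => proj2 (nodup_In _ L f) fL) dLw.
exists y, (gap w (dedup L)); do 3!split=> //; right; right; split=> //; exists (dedup L).
by split; [exact: NoDup_nodup|split].
Qed.

Lemma mspan_ghost_le_reduces n x w : mspan (ghost_le n) x -> x ** cv w <> 0 ->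
  reduces_to_real_gap x.
Proof.
elim: n x w => [|n IH] x w xn xw0.
  exists (cv w), w, (x ** cv w), (cv w); rewrite -nmulA cv_idem.
  by do !split=> //; [exact: mspan_ghost_le0_cv|left].
have [[e xe0]|/forallNP xe0] := pselect (exists e, x ** cv w ** ce e <> 0).
  have xe : mspan (ghost_le n) (x ** cv w ** ce e) by apply/mspan_ghost_le_ce/mspan_mulr_cv.
  have [|b [v [y [p [xb rest]]]]] := IH _ (r e) xe; first by rewrite -nmulA ce_cv.
  by exists (cv w ** (ce e ** b)), v, y, p; rewrite !nmulA.
have [y [p [xp [xyp [yw pw]]]]] := ce_annihilated_real_gap xn xw0 (fun e => contrapT (xe0 e)).
by exists (cv w ** p), w, y, p; rewrite nmulA -xyp xp.
Qed.

End Reduction.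

Lemma lpath_not_path mu w : ~ path_to mu w -> lpath mu (cv w) = 0.
Proof.
elim: mu => [|e mu IH] //= nmu.
have [muw|nmuw] := pselect (path_to mu w); last by rewrite IH ?nmul0r.
by rewrite -lpath_cv nmulA ce_cv0 ?nmul0l // => srce; apply: nmu; split.
Qed.

Lemma rghost_lpath_cat nu m w b : path_to nu w ->
  rghost (cv w) nu ** lpath (nu ++ m) b = cv w ** lpath m b.
Proof.
elim: nu => [|e nu IH] //= [re nuw].
by rewrite -nmulA (nmulA (ces e)) ces_ce re nmulA rghost_cv IH.
Qed.

Lemma rghost_lpath mu w : path_to mu w -> rghost (cv w) mu ** lpath mu (cv w) = cv w.
Proof. by move=> muw; rewrite -{2}[mu]cats0 rghost_lpath_cat //= cv_idem. Qed.

Lemma rghost_lpath0 nu mu w b : path_to nu w -> (size nu <= size mu)%N ->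
  (forall m, mu <> nu ++ m) -> rghost (cv w) nu ** lpath mu b = 0.
Proof.
elim: nu mu => [|e nu IH] mu /=; first by move=> _ _ /(_ mu).
case: mu => [|f mu] //= [re nuw] numu nopre.
have [ef|ef] := pselect (e = f); last by rewrite -nmulA (nmulA (ces e)) ces_ce_neq // nmul0l nmul0r.
rewrite -ef -nmulA (nmulA (ces e)) ces_ce re nmulA rghost_cv; apply: IH => // m muE.
by apply: (nopre m); rewrite ef muE.
Qed.

Definition pcomb w (F : list (K * list E1)) : C := \sum_(t <- F) t.1 *: lpath t.2 (cv w).

Lemma mspan_real_pcomb w y : mspan (real_at w) y ->
  exists F, y = pcomb w F /\ forall t, In t F -> path_to t.2 w.
Proof.
elim=> [|y1 y2 _ [F1 [-> F1w]] _ [F2 [-> F2w]]|k mu u nu [-> ->]].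
- by exists nil; rewrite /pcomb big_nil.
- exists (F1 ++ F2); rewrite /pcomb big_cat; split=> // t tF.
  by case: (in_app_or _ _ _ tF); auto.
- have [muw|nmuw] := pselect (path_to mu w).
    by exists [:: (k, mu)]; rewrite /pcomb big_seq1; split=> // t [<-|].
  by exists nil; rewrite /pcomb big_nil /monomial /= lpath_not_path ?scaler0.
Qed.

Lemma pcomb_split w mu F : pcomb w F =
  (\sum_(t <- F | `[< t.2 = mu >]) t.1) *: lpath mu (cv w) +
  pcomb w [seq t <- F | ~~ `[< t.2 = mu >]].
Proof.
rewrite /pcomb (bigID (fun t => `[< t.2 = mu >])) /= big_filter scaler_suml.
by congr (_ + _); apply: eq_bigr => t /asboolP ->.
Qed.

Definition closed_tails w mu (F : list (K * list E1)) : list (K * list E1) :=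
  [seq (t.1, drop (size mu) t.2) | t <- F & `[< exists m, t.2 = mu ++ m /\ psrc m w = w >]].

Lemma closed_tails_closed w mu F : (forall t, In t F -> path_to t.2 w /\ t.2 <> mu) ->
  forall t, In t (closed_tails w mu F) -> closed_path t.2 w.
Proof.
move=> Fw t /in_map_iff[t' [<- /filter_In[t'F /asboolP[m [t'E mw]]]]] /=.
have [t'w t'mu] := Fw _ t'F.
rewrite t'E drop_size_cat //; split; last split=> //.
- by move=> m0; apply: t'mu; rewrite t'E m0 cats0.
- by move: t'w; rewrite t'E => /path_to_cat[].
Qed.

Lemma rghost_pcomb w mu F : path_to mu w ->
  (forall t, In t F -> t.2 <> mu /\ (size mu <= size t.2)%N) ->
  rghost (cv w) mu ** pcomb w F = pcomb w (closed_tails w mu F).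
Proof.
move=> muw; elim: F => [|t F IH] FP; first by rewrite /pcomb !big_nil nmul0r.
have [tmu tsize] := FP t (or_introl erefl).
move: IH; rewrite /pcomb /closed_tails big_cons nmulDr nmulZr => -> /=; last first.
  by move=> t' t'F; apply: FP; right.
case: asboolP => [[m [tE mw]]|ntail] /=.
  have tailE : cv w ** lpath m (cv w) = lpath m (cv w) by rewrite -{1}mw lpath_cv.
  by rewrite big_cons tE rghost_lpath_cat // drop_size_cat // tailE.
have [[m tE]|nprefix] := pselect (exists m, t.2 = mu ++ m).
  rewrite tE rghost_lpath_cat // -lpath_cv nmulA cv_orth ?nmul0l ?scaler0 ?add0r // => wm.
  by apply: ntail; exists m.
by rewrite rghost_lpath0 ?scaler0 ?add0r // => m tE; apply: nprefix; exists m.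
Qed.

Section IdealAvoidance.
Hypothesis HL : condition_L r s.
Variable Z : C -> Prop.
Hypotheses (ZMl : forall a x, Z x -> Z (a ** x)) (ZMr : forall x a, Z x -> Z (x ** a)).
Hypothesis Z_cv : forall v, ~ Z (cv v).
Hypothesis Z_gap : forall w l, regular s w -> ~ X w -> enumerates_out s w l -> ~ Z (gap w l).

Lemma scale_cv_notin c v : c != 0 -> ~ Z (c *: cv v).
Proof. by move=> c0 /(ideal_unscale_idem ZMl c0 (cv_idem v)); apply: Z_cv. Qed.

Lemma scale_gap_notin c w l : c != 0 -> regular s w -> ~ X w -> enumerates_out s w l ->
  ~ Z (c *: gap w l).
Proof.
move=> c0 wreg nXw [lu lw] /(ideal_unscale_idem ZMl c0) Zg.
by apply: (Z_gap wreg nXw (conj lu lw)); apply: Zg; apply: gap_idem => // e /lw.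
Qed.

(* Sandwiching between the ghost and the path of a path escaping [G] kills all of [G]. *)
Lemma closed_comb_cv_notin w c G : c != 0 -> (forall t, In t G -> closed_path t.2 w) ->
  ~ Z ((c *: cv w + pcomb w G) ** cv w).
Proof.
move=> c0 Gw Zx.
have Gw' g : In g (map snd G) -> closed_path g w by move=> /in_map_iff[t [<- tG]]; exact: Gw.
have [l [t [lt [lw lG]]]] := escape_closed_paths HL Gw'.
pose Lm := rghost (cv t) l; pose Rm := lpath l (cv t).
have wR : cv w ** Rm = Rm by rewrite -lw lpath_cv.
have LGR : Lm ** (pcomb w G ** Rm) = 0.
  rewrite /pcomb nmul_suml nmul_sumr big_In0 // => -[k g] tG /=.
  rewrite nmulZl nmulZr -lpath_mulr wR -lpath_cat rghost_lpath0 ?scaler0 //.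
    by rewrite size_cat leq_addl.
  by apply: lG; apply/in_map_iff; exists (k, g).
apply: (scale_cv_notin (v := t) c0).
have -> : c *: cv t = Lm ** ((c *: cv w + pcomb w G) ** cv w ** Rm).
  by rewrite -nmulA wR nmulDl nmulZl wR nmulDr LGR nmulZr rghost_lpath // addr0.
by apply/ZMl/ZMr.
Qed.

Lemma closed_comb_gap_notin w l c G : c != 0 -> regular s w -> ~ X w ->
  enumerates_out s w l -> (forall t, In t G -> closed_path t.2 w) ->
  ~ Z ((c *: cv w + pcomb w G) ** gap w l).
Proof.
move=> c0 wreg nXw [lu lw] Gw Zx.
have lout e : In e l -> s e = w by move/lw.
have qG : gap w l ** pcomb w G = 0.
  rewrite /pcomb nmul_sumr big_In0 // => -[k [|f g]] /Gw[g0 [_ fw]] //.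
  by rewrite nmulZr /= nmulA (gap_ce lu lout (proj2 (lw f) fw)) nmul0l scaler0.
apply: (scale_gap_notin c0 wreg nXw (conj lu lw)).
have -> : c *: gap w l = gap w l ** ((c *: cv w + pcomb w G) ** gap w l).
  by rewrite nmulA (nmulDr (gap w l)) qG addr0 nmulZr (gap_cv lout) nmulZl gap_idem.
exact: ZMl.
Qed.

(* Either an edge [e] out of [w] is neither in [L] nor the first edge of a path of [G],
   and then [e^*] and [e] cut out [c r(e)]; or [w] has finitely many edges and is regular. *)
Lemma closed_comb_irregular_gap_notin w L c G : c != 0 -> ~ regular s w -> NoDup L ->
  (forall f, In f L -> s f = w) -> (forall t, In t G -> closed_path t.2 w) ->
  ~ Z ((c *: cv w + pcomb w G) ** gap w L).
Proof.
move=> c0 nreg Lu Lw Gw Zx.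
pose M := flat_map (fun t => firstn 1 t.2) G.
have Mw e : In e M -> s e = w.
  move=> /in_flat_map[[k [|f g]] [tG //= [<-|//]]].
  by have [_ [_ fw]] := Gw _ tG.
have [[e [ew [eL eM]]]|/forallNP noexit] := pselect (exists e, s e = w /\ ~ In e L /\ ~ In e M).
  have ge : gap w L ** ce e = ce e.
    rewrite nmulBl -ew cv_ce nmul_suml big_In0 ?subr0 // => f fL.
    by rewrite -nmulA ces_ce_neq ?nmul0r // => fe; apply: eL; rewrite -fe.
  have eG : ces e ** pcomb w G = 0.
    rewrite /pcomb nmul_sumr big_In0 // => -[k [|f g]] tG; first by case: (Gw _ tG).
    rewrite nmulZr /= nmulA ces_ce_neq ?nmul0l ?scaler0 // => ef; apply: eM.
    by apply/in_flat_map; exists (k, f :: g); split=> //; rewrite ef; left.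
  apply: (scale_cv_notin (v := r e) c0).
  have -> : c *: cv (r e) = ces e ** ((c *: cv w + pcomb w G) ** gap w L ** ce e).
    by rewrite -nmulA ge nmulA nmulDr eG addr0 nmulZr -ew ces_cv nmulZl ces_ce.
  by apply/ZMl/ZMr.
case: L Lu Lw noexit Zx => [|f L] Lu Lw noexit Zx.
  by move: Zx; rewrite /gap big_nil subr0; apply: closed_comb_cv_notin.
apply: nreg; exists (dedup (f :: L ++ M)); split; last first.
  have fd : In f (dedup (f :: L ++ M)) by apply/nodup_In; left.
  by move=> d0; rewrite d0 in fd.
split=> [|e]; first exact: NoDup_nodup.
rewrite nodup_In; split=> [[<-|eLM]|ew]; first by apply: Lw; left.
  by case: (in_app_or _ _ _ eLM) => [eL|eM]; [apply: Lw; right|exact: Mw].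
apply: contrapT => eLM; apply: (noexit e); split=> //; split=> eX; apply: eLM.
  by case: eX => [<-|eL]; [left|right; apply: in_or_app; left].
by right; apply: in_or_app; right.
Qed.

(* Induction on [F]: either the coefficients of a shortest path of [F] cancel, or its ghost
   turns [pcomb w F] into [c w] plus closed paths at [w], with [c <> 0]. *)
Lemma pcomb_gap_notin w p F : gap_kind w p -> (forall t, In t F -> path_to t.2 w) ->
  pcomb w F ** p <> 0 -> ~ Z (pcomb w F ** p).
Proof.
move=> pw; have [n] := ubnP (size F); elim: n F => // n IH F /ltnSE Fn Fw Fp0 ZFp.
have [F0|/(In_argmin (fun t => size t.2))[t1 [t1F t1min]]] := pselect (F = nil).
  by apply: Fp0; rewrite F0 /pcomb big_nil nmul0l.
set mu := t1.2; set c := \sum_(t <- F | `[< t.2 = mu >]) t.1.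
set F' := [seq t <- F | ~~ `[< t.2 = mu >]].
have F'F t : In t F' -> In t F /\ t.2 <> mu by move=> /filter_In[tF /asboolPn].
have Fsplit := pcomb_split w mu F; rewrite -/c -/F' in Fsplit.
have [c0|c0] := eqVneq c 0.
  rewrite Fsplit c0 scale0r add0r in Fp0 ZFp.
  apply: (IH F') => // [|t /F'F[/Fw]] //.
  by apply: leq_trans Fn; apply: (size_filter_lt t1F); rewrite negbK; apply/asboolP.
have muw : path_to mu w by apply: Fw.
have Gw t : In t (closed_tails w mu F') -> closed_path t.2 w.
  by apply: closed_tails_closed => {}t /F'F[tF tmu]; split=> //; apply: Fw.
have := ZMl (rghost (cv w) mu) ZFp.
rewrite nmulA Fsplit nmulDr nmulZr rghost_lpath // rghost_pcomb //; last first.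
  by move=> t /F'F[tF tmu]; split=> //; apply: t1min.
case: pw => [->|[[wreg [nXw [l [lw ->]]]]|[nreg [L [Lu [Lw ->]]]]]].
- exact: closed_comb_cv_notin c0 Gw.
- exact: closed_comb_gap_notin c0 wreg nXw lw Gw.
- exact: closed_comb_irregular_gap_notin c0 nreg Lu Lw Gw.
Qed.

End IdealAvoidance.
End CohnFamily.

Theorem mainTheorem5 (K : fieldType) (E0 E1 : Type) (r s : E1 -> E0)
    (X : E0 -> Prop)
    (HL : condition_L r s)
    (HX : forall v, X v -> regular s v)
    (C : nualg K) (cv : E0 -> C) (ce ces : E1 -> C)
    (HC : is_rel_cohn_path_algebra r s X cv ce ces)
    (A : nuring) (pi : nualg_ring C -> A)
    (Hpi : ring_hom pi)
    (Hu : forall u : E0, pi (cv u) <> 0)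
    (HY : forall v : E0, regular s v -> ~ X v ->
          forall l, enumerates_out s v l ->
          pi (cv v - \sum_(e <- l) na_mul (ce e) (ces e)) <> 0) :
  injective pi.
Proof.
have HF : cohn_family r s X cv ce ces by case: HC.
apply: (ring_hom_inj Hpi) => x pix0; apply: contrapT => x0.
have [n xn] := mspan_ghost_le (cohn_path_algebra_spanned HF HC x).
have [w xw0] := mspan_neq0_cv HF xn x0.
have [b [v [y [p [xb [yp0 [yv pv]]]]]]] := mspan_ghost_le_reduces HF HX xn xw0.
have [F [yF Fv]] := mspan_real_pcomb HF yv.
have kerMl a z : pi z = 0 -> pi (na_mul a z) = 0 by apply: ring_hom_kerMl.
have kerMr z a : pi z = 0 -> pi (na_mul z a) = 0 by apply: ring_hom_kerMr.
have Zgap w' l : regular s w' -> ~ X w' -> enumerates_out s w' l -> pi (gap cv ce ces w' l) <> 0.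
  by move=> wreg nXw lw; apply: HY.
apply: (pcomb_gap_notin HF HL kerMl kerMr Hu Zgap pv Fv); rewrite -yF //.
by rewrite -xb; apply: kerMr.
Qed.
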